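(* In the Setting below, the decomposition $\mathcal M=N_{\mathcal M}\oplus J_{\mathcal M}$ is a $\mathbb Z_2$-grading of the algebra $\mathcal M$ with even part $N_{\mathcal M}$ and odd part $J_{\mathcal M}$; that is, $N_{\mathcal M}N_{\mathcal M}\subseteq N_{\mathcal M}$, $N_{\mathcal M}J_{\mathcal M}\subseteq J_{\mathcal M}$ and $J_{\mathcal M}J_{\mathcal M}\subseteq N_{\mathcal M}$.
   Context: Setting. Let $\mathbb F$ be a field of characteristic different from $2$ and $3$. A Malcev algebra is an anticommutative algebra $\mathcal M$ over $\mathbb F$ satisfying $(xz)(yt)=((xy)z)t+((yz)t)x+((zt)x)y+((tx)y)z$. Products are left-normed: $xyz=(xy)z$, $xyzt=((xy)z)t$. Put $J(x,y,z)=xyz+yzx+zxy$ (the Jacobian), $\{x,y,z\}=xyz-xzy+2x(yz)$, and $h(y,z,t,x,u)=\{yz,t,u\}x+\{yz,t,x\}u+\{yx,z,u\}t+\{yu,z,x\}t$. The variety $\mathcal H$ consists of the Malcev algebras satisfying $h(y,z,t,x,u)=0$ identically. Let $L=\mathfrak{sl}_2(\mathbb F)$ with basis $E,H,F$ and products $EH=E$, $FH=-F$, $EF=\tfrac12 H$. Standing assumption: $\mathcal M\in\mathcal H$ contains $L$ as a subalgebra and $mL\neq 0$ for every $0\neq m\in\mathcal M$. Define $N_{\mathcal M}=\{m\in\mathcal M: J(m,a,b)=0\ \forall a,b\in L\}$ and $J_{\mathcal M}=\{m\in\mathcal M:\{m,a,b\}=0\ \forall a,b\in L\}$. Known fact (from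 prior work): $\mathcal M=N_{\mathcal M}\oplus J_{\mathcal M}$, and $J_{\mathcal M}$ is a direct sum of $2$-dimensional $L$-submodules with bases $\{u,v\}$, $uH=u$, $vH=-v$, $uE=v$, $uF=0$, $vE=0$, $vF=-u$. *)

From mathcomp Require Import all_boot all_algebra.
Set Implicit Arguments. Unset Strict Implicit. Unset Printing Implicit Defensive.
Import GRing.Theory.
Local Open Scope ring_scope.

Section MalcevDefs.
Variables (K : fieldType) (M : lmodType K) (mul : M -> M -> M).

Definition prod_bilinear : Prop :=
  (forall (a : K) (x y z : M), mul (a *: x + y) z = a *: mul x z + mul y z) /\
  (forall (a : K) (x y z : M), mul z (a *: x + y) = a *: mul z x + mul z y).

Definition anticommutative : Prop := forall x : M, mul x x = 0.

Definition malcev_identity : Prop :=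
  forall x y z t : M,
    mul (mul x z) (mul y t) =
    mul (mul (mul x y) z) t + mul (mul (mul y z) t) x
    + mul (mul (mul z t) x) y + mul (mul (mul t x) y) z.

Definition is_malcev : Prop :=
  [/\ prod_bilinear, anticommutative & malcev_identity].

Definition jacobian (x y z : M) : M :=
  mul (mul x y) z + mul (mul y z) x + mul (mul z x) y.

Definition trip (x y z : M) : M :=
  mul (mul x y) z - mul (mul x z) y + (mul x (mul y z)) *+ 2.

Definition hpoly (y z t x u : M) : M :=
  mul (trip (mul y z) t u) x + mul (trip (mul y z) t x) u
  + mul (trip (mul y x) z u) t + mul (trip (mul y u) z x) t.

Definition in_variety_H : Prop :=
  is_malcev /\ forall y z t x u : M, hpoly y z t x u = 0.

Definition sl2_triple (e h f : M) : Prop :=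
  [/\ (forall a b c : K, a *: e + b *: h + c *: f = 0 -> [/\ a = 0, b = 0 & c = 0]),
      mul e h = e, mul f h = - f & mul e f = 2%:R^-1 *: h].

Definition inL (e h f : M) (x : M) : Prop :=
  exists a b c : K, x = a *: e + b *: h + c *: f.

Definition inN (e h f : M) (m : M) : Prop :=
  forall a b : M, inL e h f a -> inL e h f b -> jacobian m a b = 0.

Definition inJ (e h f : M) (m : M) : Prop :=
  forall a b : M, inL e h f a -> inL e h f b -> trip m a b = 0.

End MalcevDefs.

From mathcomp Require Import all_boot all_algebra.
Set Implicit Arguments. Unset Strict Implicit. Unset Printing Implicit Defensive.
Import GRing.Theory.
Local Open Scope ring_scope.

(* Write J(m,a,b) for the Jacobian.  For m in N we have J(m,e,f) = 0, while
   for m in J the defining identity {m,e,f} = 0 together with 2 ef = h gives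
   2 J(m,e,f) = -3 mh; moreover (mh)h = m on J.  Hence
       projJ m := -(1/3) (2 J(m,e,f)) h
   is the projection of M onto J along N, and m lies in N iff J(m,e,f) = 0.
   N and J are stable under right multiplication by e, h, f, so projJ commutes
   with these operators.  The three inclusions NN <= N, NJ <= J, JJ <= N are
   then obtained by applying projJ to suitable instances of the Sagle identity
       J(wx,y,z) = w J(x,y,z) + J(w,y,z) x - 2 J(yz,w,x),
   a consequence of the Malcev identity, and cancelling 2 and 3.

   Each such step is a Z-linear combination of instances of known equations
   that vanishes identically in the free anticommutative algebra. *)

(* Monomials of the free nonassociative algebra: binary trees whose leaves are
   numbered generators, compared by a total order to get normal forms. *)
Inductive shape := Leaf of nat | Node of shape & shape.

Definition nat_cmp (i j : nat) : comparison :=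
  if i == j then Eq else if (i < j)%N then Lt else Gt.

Lemma nat_cmp_eq i j : nat_cmp i j = Eq -> i = j.
Proof. by rewrite /nat_cmp; case: eqP => // _; case: ifP. Qed.

Fixpoint shape_cmp (a b : shape) : comparison :=
  match a, b with
  | Leaf i, Leaf j => nat_cmp i j
  | Leaf _, Node _ _ => Lt
  | Node _ _, Leaf _ => Gt
  | Node a1 a2, Node b1 b2 =>
      match shape_cmp a1 b1 with Eq => shape_cmp a2 b2 | c => c end
  end.

Lemma shape_cmp_eq a b : shape_cmp a b = Eq -> a = b.
Proof.
elim: a b => [i|a1 IH1 a2 IH2] [j|b1 b2] //=; first by move/nat_cmp_eq ->.
by case E: (shape_cmp a1 b1) => // /IH2 ->; rewrite (IH1 _ E).
Qed.

Inductive term :=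
  | TAtom of nat | TMul of term & term | TAdd of term & term
  | TOpp of term | TZero | TIntMul of term & int | TNatMul of term & nat.

(* A monomial c * t; a polynomial is a list of monomials. *)
Definition monomial := (int * shape)%type.

(* Product of monomials, using anticommutativity to order the two factors;
   the square of a monomial vanishes. *)
Definition mono_mul (p q : monomial) : option monomial :=
  match shape_cmp p.2 q.2 with
  | Eq => None
  | Lt => Some (p.1 * q.1, Node p.2 q.2)
  | Gt => Some (- (p.1 * q.1), Node q.2 p.2)
  end.

Fixpoint expand (t : term) : seq monomial :=
  match t with
  | TAtom i => [:: (1, Leaf i)]
  | TMul a b =>
      let pb := expand b in flatten (map (fun p => pmap (mono_mul p) pb) (expand a))
  | TAdd a b => expand a ++ expand b
  | TOpp a => map (fun p => (- p.1, p.2)) (expand a)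
  | TZero => [::]
  | TIntMul a z => map (fun p => (p.1 * z, p.2)) (expand a)
  | TNatMul a n => map (fun p => (p.1 * n%:Z, p.2)) (expand a)
  end.

(* Insertion into a sorted polynomial, merging like monomials and dropping
   zero coefficients; [collect] therefore computes a canonical form. *)
Fixpoint mono_insert (p : monomial) (l : seq monomial) : seq monomial :=
  match l with
  | [::] => if p.1 == 0 then [::] else [:: p]
  | q :: l' =>
      match shape_cmp p.2 q.2 with
      | Lt => if p.1 == 0 then l else p :: l
      | Eq => let c := p.1 + q.1 in if c == 0 then l' else (c, q.2) :: l'
      | Gt => q :: mono_insert p l'
      end
  end.

Definition collect (l : seq monomial) : seq monomial := foldr mono_insert [::] l.

Section AnticommutativeNormalForm.
Variables (V : zmodType) (mu : V -> V -> V).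
Hypothesis muDl : forall x y z, mu (x + y) z = mu x z + mu y z.
Hypothesis muDr : forall x y z, mu x (y + z) = mu x y + mu x z.
Hypothesis mu_xx : forall x, mu x x = 0.

Lemma mu0l y : mu 0 y = 0.
Proof. by apply: (addIr (mu 0 y)); rewrite -muDl !add0r. Qed.

Lemma mu0r y : mu y 0 = 0.
Proof. by apply: (addIr (mu y 0)); rewrite -muDr !add0r. Qed.

Lemma muNl x y : mu (- x) y = - mu x y.
Proof. by apply/eqP; rewrite -addr_eq0 -muDl addNr mu0l. Qed.

Lemma muNr x y : mu x (- y) = - mu x y.
Proof. by apply/eqP; rewrite -addr_eq0 -muDr addNr mu0r. Qed.

Lemma mu_anti x y : mu x y = - mu y x.
Proof.
apply/eqP; rewrite -addr_eq0; move: (mu_xx (x + y)).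
by rewrite muDl !muDr !mu_xx add0r addr0 => ->.
Qed.

Lemma mu_mulnl x y n : mu (x *+ n) y = mu x y *+ n.
Proof. by elim: n => [|n IH]; rewrite ?mulr0n ?mu0l // !mulrS muDl IH. Qed.

Lemma mu_mulzl x y z : mu (x *~ z) y = mu x y *~ z.
Proof.
case: z => n; first by rewrite -!pmulrn mu_mulnl.
by rewrite !NegzE !mulrNz muNl -!pmulrn mu_mulnl.
Qed.

Lemma mu_mulzr x y z : mu x (y *~ z) = mu x y *~ z.
Proof. by rewrite mu_anti mu_mulzl -mulNrz -mu_anti. Qed.

Fixpoint shape_eval (env : seq V) (t : shape) : V :=
  match t with
  | Leaf i => nth 0 env i
  | Node a b => mu (shape_eval env a) (shape_eval env b)
  end.

Definition poly_eval (env : seq V) (l : seq monomial) : V :=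
  \sum_(p <- l) shape_eval env p.2 *~ p.1.

Fixpoint term_eval (env : seq V) (t : term) : V :=
  match t with
  | TAtom i => nth 0 env i
  | TMul a b => mu (term_eval env a) (term_eval env b)
  | TAdd a b => term_eval env a + term_eval env b
  | TOpp a => - term_eval env a
  | TZero => 0
  | TIntMul a z => term_eval env a *~ z
  | TNatMul a n => term_eval env a *+ n
  end.

Lemma poly_eval_cat env l1 l2 :
  poly_eval env (l1 ++ l2) = poly_eval env l1 + poly_eval env l2.
Proof. by rewrite /poly_eval big_cat. Qed.

Lemma mu_poly_evall env l y :
  mu (poly_eval env l) y = \sum_(p <- l) mu (shape_eval env p.2 *~ p.1) y.
Proof.
rewrite /poly_eval; elim: l => [|p l IH]; first by rewrite !big_nil mu0l.
by rewrite !big_cons muDl IH.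
Qed.

Lemma mu_poly_evalr env l y :
  mu y (poly_eval env l) = \sum_(p <- l) mu y (shape_eval env p.2 *~ p.1).
Proof.
rewrite /poly_eval; elim: l => [|p l IH]; first by rewrite !big_nil mu0r.
by rewrite !big_cons muDr IH.
Qed.

Lemma mono_mul_eval env p q :
  (if mono_mul p q is Some r then shape_eval env r.2 *~ r.1 else 0)
  = mu (shape_eval env p.2 *~ p.1) (shape_eval env q.2 *~ q.1).
Proof.
rewrite /mono_mul mu_mulzl mu_mulzr -mulrzA (mulrC q.1).
case E: (shape_cmp p.2 q.2) => //=; first by rewrite (shape_cmp_eq E) mu_xx mul0rz.
by rewrite mu_anti mulrNz mulNrz opprK.
Qed.

Lemma poly_eval_pmap env p l :
  poly_eval env (pmap (mono_mul p) l) = mu (shape_eval env p.2 *~ p.1) (poly_eval env l).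
Proof.
rewrite mu_poly_evalr /poly_eval; elim: l => [|q l IH]; first by rewrite !big_nil.
rewrite big_cons /=; have := mono_mul_eval env p q.
case: (mono_mul p q) => [r|] <-; last by rewrite add0r.
by rewrite big_cons IH.
Qed.

Lemma expand_sound env t : term_eval env t = poly_eval env (expand t).
Proof.
elim: t => [i|a IHa b IHb|a IHa b IHb|a IHa||a IHa z|a IHa n] /=.
- by rewrite /poly_eval big_seq1 mulr1z.
- rewrite IHa IHb mu_poly_evall.
  elim: (expand a) => [|p l IH]; first by rewrite /poly_eval !big_nil.
  by rewrite /= poly_eval_cat big_cons IH poly_eval_pmap.
- by rewrite IHa IHb poly_eval_cat.
- by rewrite IHa /poly_eval big_map -sumrN; apply: eq_bigr => p _; rewrite mulrNz.
- by rewrite /poly_eval big_nil.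
- rewrite IHa /poly_eval big_map.
  rewrite (big_morph (fun x : V => x *~ z) (mulrzDl z) (mul0rz V z)).
  by apply: eq_bigr => p _; rewrite mulrzA.
- rewrite IHa /poly_eval big_map.
  rewrite (big_morph (fun x : V => x *+ n) (fun x y => mulrnDl n x y) (mul0rn _ n)).
  by apply: eq_bigr => p _; rewrite mulrzA -pmulrn.
Qed.

Lemma poly_eval_insert env p l :
  poly_eval env (mono_insert p l) = shape_eval env p.2 *~ p.1 + poly_eval env l.
Proof.
rewrite /poly_eval; elim: l => [|q l IH] /=.
  by case: eqP => [->|_]; rewrite ?big_seq1 big_nil ?mulr0z addr0.
case E: (shape_cmp p.2 q.2).
- rewrite (shape_cmp_eq E) big_cons addrA -mulrzDr.
  by case: eqP => [->|_]; rewrite ?big_cons ?mulr0z ?add0r.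
- by case: eqP => [->|_]; rewrite ?big_cons ?mulr0z ?add0r.
- by rewrite !big_cons IH addrCA.
Qed.

Lemma collect_sound env l : poly_eval env (collect l) = poly_eval env l.
Proof.
elim: l => [|p l IH] //=.
by rewrite poly_eval_insert IH /poly_eval big_cons.
Qed.

Lemma term_eval_eq0 env t : collect (expand t) = [::] -> term_eval env t = 0.
Proof. by move=> H; rewrite expand_sound -collect_sound H /poly_eval big_nil. Qed.

End AnticommutativeNormalForm.

(* To prove x = y from the equation l = r it suffices to show that
   x - y - k (l - r) vanishes; iterating this step produces a goal that is an
   identity of the free anticommutative algebra. *)
Lemma eq_by_combination (V : zmodType) (x y l r : V) (k : int) :
  l = r -> x - y - (l - r) *~ k = 0 -> x = y.
Proof. by move=> -> /eqP; rewrite subrr mul0rz subr0 subr_eq0 => /eqP. Qed.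

Tactic Notation "combine" constr(H) uconstr(k) :=
  refine (eq_by_combination (k := k) H _).

Ltac list_mem x l :=
  lazymatch l with
  | nil => constr:(false)
  | x :: _ => constr:(true)
  | _ :: ?l' => list_mem x l'
  end.

Ltac list_index x l :=
  lazymatch l with
  | x :: _ => constr:(0%nat)
  | _ :: ?l' => let n := list_index x l' in constr:(S n)
  end.

Ltac term_atoms mu t l :=
  lazymatch t with
  | mu ?a ?b => let l := term_atoms mu a l in term_atoms mu b l
  | ?a + ?b => let l := term_atoms mu a l in term_atoms mu b l
  | - ?a => term_atoms mu a l
  | 0 => l
  | ?a *~ _ => term_atoms mu a l
  | ?a *+ _ => term_atoms mu a l
  | _ => let b := list_mem t l in
         lazymatch b with true => l | false => constr:(t :: l) end
  end.

Ltac reify_term mu t l :=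
  lazymatch t with
  | mu ?a ?b =>
      let ra := reify_term mu a l in let rb := reify_term mu b l in constr:(TMul ra rb)
  | ?a + ?b =>
      let ra := reify_term mu a l in let rb := reify_term mu b l in constr:(TAdd ra rb)
  | - ?a => let ra := reify_term mu a l in constr:(TOpp ra)
  | 0 => constr:(TZero)
  | ?a *~ ?z => let ra := reify_term mu a l in constr:(TIntMul ra z)
  | ?a *+ ?n => let ra := reify_term mu a l in constr:(TNatMul ra n)
  | _ => let i := list_index t l in constr:(TAtom i)
  end.

(* Closes a goal t = 0 that holds in every anticommutative biadditive algebra. *)
Ltac anticomm_identity mu muDl muDr mu_xx :=
  unfold jacobian, trip;
  lazymatch goal with |- @eq ?T ?t 0 =>
    let l := term_atoms mu t (@nil T) in
    let r := reify_term mu t l in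
    exact (@term_eval_eq0 _ mu muDl muDr mu_xx l r ltac:(vm_compute; reflexivity))
  end.

Lemma natmul_eq0 (K : fieldType) (M : lmodType K) (x : M) (n : nat) :
  (n%:R : K) != 0 -> x *+ n = 0 -> x = 0.
Proof. by move=> n0 /eqP; rewrite -scaler_nat scaler_eq0 (negbTE n0) => /eqP. Qed.

Section MalcevAlgebra.
Variables (K : fieldType) (M : lmodType K) (mul : M -> M -> M).
Hypothesis mul_bilinear : prod_bilinear mul.
Hypothesis mul_xx : anticommutative mul.
Hypothesis malcev : malcev_identity mul.

Local Notation jac := (jacobian mul).
Local Notation tr := (trip mul).

Lemma mulDl x y z : mul (x + y) z = mul x z + mul y z.
Proof. by have := mul_bilinear.1 1 x y z; rewrite !scale1r. Qed.

Lemma mulDr x y z : mul x (y + z) = mul x y + mul x z.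
Proof. by have := mul_bilinear.2 1 y z x; rewrite !scale1r. Qed.

Lemma mulZl a x y : mul (a *: x) y = a *: mul x y.
Proof. by have := mul_bilinear.1 a x 0 y; rewrite !addr0 (mu0l mulDl) addr0. Qed.

Lemma mulZr a x y : mul y (a *: x) = a *: mul y x.
Proof. by have := mul_bilinear.2 a x 0 y; rewrite !addr0 (mu0r mulDr) addr0. Qed.

Local Notation mul0l := (mu0l mulDl).
Local Notation mulNl := (muNl mulDl).
Local Notation mulNr := (muNr mulDr).
Local Notation mul_anti := (mu_anti mulDl mulDr mul_xx).

Ltac anticomm := anticomm_identity mul mulDl mulDr mul_xx.

Lemma sagle w x y z :
  jac (mul w x) y z = mul w (jac x y z) + mul (jac w y z) x - jac (mul y z) w x *+ 2.
Proof.
combine (malcev w x z y) 1; combine (malcev w y x z) 1; combine (malcev w y z x) 1.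
anticomm.
Qed.

Lemma jacDl x y a b : jac (x + y) a b = jac x a b + jac y a b.
Proof. by apply/eqP; rewrite -subr_eq0; apply/eqP; anticomm. Qed.

Lemma jacZl k x a b : jac (k *: x) a b = k *: jac x a b.
Proof. by rewrite /jacobian !mulZl !mulZr !mulZl !scalerDr. Qed.

Lemma tripDl x y a b : tr (x + y) a b = tr x a b + tr y a b.
Proof. by apply/eqP; rewrite -subr_eq0; apply/eqP; anticomm. Qed.

Lemma tripZl k x a b : tr (k *: x) a b = k *: tr x a b.
Proof. by rewrite /trip !mulZl scalerDr scalerBr scalerMnr. Qed.

Variables (e h f : M).
Local Notation inN := (inN mul e h f).
Local Notation inJ := (inJ mul e h f).
Local Notation inL := (inL e h f).

Lemma inN0 : inN 0.
Proof. by move=> a b _ _; anticomm. Qed.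

Lemma inNZ k x : inN x -> inN (k *: x).
Proof. by move=> Hx a b Ha Hb; rewrite jacZl Hx // scaler0. Qed.

Lemma inJ0 : inJ 0.
Proof. by move=> a b _ _; anticomm. Qed.

Lemma inJD x y : inJ x -> inJ y -> inJ (x + y).
Proof. by move=> Hx Hy a b Ha Hb; rewrite tripDl Hx // Hy // addr0. Qed.

Lemma inJZ k x : inJ x -> inJ (k *: x).
Proof. by move=> Hx a b Ha Hb; rewrite tripZl Hx // scaler0. Qed.

Lemma inJN x : inJ x -> inJ (- x).
Proof. by rewrite -scaleN1r; apply: inJZ. Qed.

Lemma inJ_sum (I : eqType) (s : seq I) (F : I -> M) :
  (forall i, i \in s -> inJ (F i)) -> inJ (\sum_(i <- s) F i).
Proof.
by move=> H; rewrite big_seq_cond; apply: (big_ind inJ inJ0 inJD) => i /andP[/H].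
Qed.

Lemma mul_suml (I : Type) (s : seq I) (F : I -> M) c :
  mul (\sum_(i <- s) F i) c = \sum_(i <- s) mul (F i) c.
Proof. by elim: s => [|i s IH]; rewrite ?big_nil ?mul0l // !big_cons mulDl IH. Qed.

(* Right multiplication by e, h, f as seen on J_M: when J_M is a sum of the
   2-dimensional modules <u, v> of the known classification, it is stable
   under these operators, and (jh)h = j because h acts by +1 and -1. *)
Lemma J_right_action :
  (forall j, inJ j -> exists s : seq ((K * K) * (M * M)),
     (forall p, p \in s ->
        [/\ inJ p.2.1 /\ inJ p.2.2,
            mul p.2.1 h = p.2.1 /\ mul p.2.2 h = - p.2.2,
            mul p.2.1 e = p.2.2,
            mul p.2.1 f = 0 /\ mul p.2.2 e = 0 &
            mul p.2.2 f = - p.2.1]) /\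
     j = \sum_(p <- s) (p.1.1 *: p.2.1 + p.1.2 *: p.2.2)) ->
  forall j, inJ j ->
    [/\ inJ (mul j e), inJ (mul j h), inJ (mul j f) & mul (mul j h) h = j].
Proof.
move=> Hstruct j /Hstruct [s [Hs ->]]; rewrite !mul_suml; split.
- apply: inJ_sum => p /Hs [[Hu Hv] _ ue [_ ve] _].
  by rewrite mulDl !mulZl ue ve scaler0 addr0; apply: inJZ.
- apply: inJ_sum => p /Hs [[Hu Hv] [uh vh] _ _ _].
  by rewrite mulDl !mulZl uh vh; apply: inJD; apply: inJZ => //; apply: inJN.
- apply: inJ_sum => p /Hs [[Hu Hv] _ _ [uf _] vf].
  by rewrite mulDl !mulZl uf vf scaler0 add0r; apply: inJZ; apply: inJN.
- rewrite big_seq [RHS]big_seq; apply: eq_bigr => p /Hs [_ [uh vh] _ _ _].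
  by rewrite !mulDl !mulZl uh vh uh mulNl vh opprK.
Qed.

Section Grading.
Hypothesis char2 : (2%:R : K) != 0.
Hypothesis char3 : (3%:R : K) != 0.
Hypothesis sl2 : sl2_triple mul e h f.
Hypothesis decomposition : forall m, exists n j, [/\ inN n, inJ j & m = n + j].
Hypothesis J_action : forall j, inJ j ->
  [/\ inJ (mul j e), inJ (mul j h), inJ (mul j f) & mul (mul j h) h = j].

Lemma eh : mul e h = e. Proof. by case: sl2. Qed.
Lemma fh : mul f h = - f. Proof. by case: sl2. Qed.
Lemma ef : mul e f = 2%:R^-1 *: h. Proof. by case: sl2. Qed.
Lemma hf : mul h f = f. Proof. by rewrite mul_anti fh opprK. Qed.

Lemma ef2 : mul e f *+ 2 = h.
Proof. by rewrite ef scalerMnl -mulr_natr mulVf // scale1r. Qed.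

Lemma inLe : inL e. Proof. by exists 1, 0, 0; rewrite !scale0r !addr0 scale1r. Qed.
Lemma inLh : inL h. Proof. by exists 0, 1, 0; rewrite !scale0r add0r addr0 scale1r. Qed.
Lemma inLf : inL f. Proof. by exists 0, 0, 1; rewrite !scale0r !add0r scale1r. Qed.

Lemma jac_eef : jac e e f = 0. Proof. by anticomm. Qed.
Lemma jac_fef : jac f e f = 0. Proof. by anticomm. Qed.

Lemma jac_hef : jac h e f = 0.
Proof.
apply: (natmul_eq0 char2).
combine (congr1 (mul^~ f) eh) (-2); combine (congr1 (mul^~ e) fh) 2.
combine (congr1 (mul^~ h) ef2) 1; anticomm.
Qed.

Lemma jac_ef_J j : inJ j -> jac j e f *+ 2 = - (mul j h *+ 3).
Proof.
move=> Hj; apply/eqP; rewrite -subr_eq0; apply/eqP.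
combine (Hj e f inLe inLf) 2; combine (congr1 (mul j) ef2) (-3); anticomm.
Qed.

(* The projection of M onto J_M along N_M. *)
Definition projJ (m : M) : M := - (3%:R : K)^-1 *: mul (jac m e f *+ 2) h.

Local Notation projN m := (m - projJ m).

Lemma projJ_N n : inN n -> projJ n = 0.
Proof. by move=> Hn; rewrite /projJ (Hn e f inLe inLf) mul0rn mul0l scaler0. Qed.

Lemma projJ_J j : inJ j -> projJ j = j.
Proof.
move=> Hj; have [_ _ _ Hjhh] := J_action Hj.
rewrite /projJ jac_ef_J // mulNl (mu_mulnl mulDl) Hjhh scaleNr scalerN opprK.
by rewrite -scaler_nat scalerA mulVf // scale1r.
Qed.

Lemma projJD x y : projJ (x + y) = projJ x + projJ y.
Proof. by rewrite /projJ jacDl mulrnDl mulDl scalerDr. Qed.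

Lemma projJ_spec m : inJ (projJ m) /\ inN (projN m).
Proof.
have [n [j [Hn Hj ->]]] := decomposition m.
by rewrite projJD projJ_N // projJ_J // add0r addrK.
Qed.

Lemma projJ_sum n j : inN n -> inJ j -> projJ (n + j) = j.
Proof. by move=> Hn Hj; rewrite projJD projJ_N // projJ_J // add0r. Qed.

Lemma projJ_id m : projJ (projJ m) = projJ m.
Proof. exact: projJ_J (proj1 (projJ_spec m)). Qed.

Lemma projJN x : projJ (- x) = - projJ x.
Proof. by apply/eqP; rewrite -addr_eq0 -projJD addNr projJ_N //; apply: inN0. Qed.

Lemma projJZ k x : projJ (k *: x) = k *: projJ x.
Proof.
have [HJ HN] := projJ_spec x.
by rewrite -{1}(subrK (projJ x) x) scalerDr projJ_sum //; [apply: inNZ | apply: inJZ].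
Qed.

Lemma inN_jac_ef m : jac m e f = 0 -> inN m.
Proof.
move=> H; have [_ Hn] := projJ_spec m.
by move: Hn; rewrite /projJ H mul0rn mul0l scaler0 subr0.
Qed.

Lemma inN_mul_L n c : inN n -> inL c -> jac c e f = 0 -> inN (mul n c).
Proof.
move=> Hn Hc Hcef; apply: inN_jac_ef.
combine (sagle n c e f) 1; combine (congr1 (mul^~ c) (Hn e f inLe inLf)) 1.
combine (Hn c h Hc inLh) (-1); combine (congr1 (fun x => jac x n c) ef2) (-1).
combine (congr1 (mul n) Hcef) 1; anticomm.
Qed.

Lemma inN_e n : inN n -> inN (mul n e). Proof. by move/inN_mul_L; apply; [apply: inLe | apply: jac_eef]. Qed.
Lemma inN_h n : inN n -> inN (mul n h). Proof. by move/inN_mul_L; apply; [apply: inLh | apply: jac_hef]. Qed.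
Lemma inN_f n : inN n -> inN (mul n f). Proof. by move/inN_mul_L; apply; [apply: inLf | apply: jac_fef]. Qed.

Lemma projJ_mulr m c : (forall n, inN n -> inN (mul n c)) ->
  (forall j, inJ j -> inJ (mul j c)) -> projJ (mul m c) = mul (projJ m) c.
Proof.
move=> HNc HJc; have [HJ HN] := projJ_spec m.
by rewrite -{1}(subrK (projJ m) m) mulDl projJ_sum //; [apply: HNc | apply: HJc].
Qed.

Lemma projJe m : projJ (mul m e) = mul (projJ m) e.
Proof. by apply: projJ_mulr => [n /inN_e|j /J_action []]. Qed.
Lemma projJh m : projJ (mul m h) = mul (projJ m) h.
Proof. by apply: projJ_mulr => [n /inN_h|j /J_action []]. Qed.
Lemma projJf m : projJ (mul m f) = mul (projJ m) f.
Proof. by apply: projJ_mulr => [n /inN_f|j /J_action []]. Qed.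

Lemma jac_ef_projJ m : jac m e f *+ 2 = - (mul (projJ m) h *+ 3).
Proof.
have [HJ HN] := projJ_spec m; apply/eqP; rewrite -subr_eq0; apply/eqP.
by combine (HN e f inLe inLf) 2; combine (jac_ef_J HJ) 1; anticomm.
Qed.

Lemma projJ_hh m : mul (mul (projJ m) h) h = projJ m.
Proof. by have [_ _ _ ->] := J_action (proj1 (projJ_spec m)). Qed.

(* Case J J <= N.  The Sagle identity for (j1 j2, e, f) expresses the action
   of h on the J-part of j1 j2 through the products with j1 h and j2 h. *)
Lemma projJ_JJ_h j1 j2 : inJ j1 -> inJ j2 ->
  mul (projJ (mul j1 j2)) h = projJ (mul j1 (mul j2 h)) + projJ (mul (mul j1 h) j2).
Proof.
move=> H1 H2.
have sagle_ef : mul (mul j1 j2) h *+ 2 + mul j1 (mul j2 h) + mul (mul j1 h) j2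
                = mul (projJ (mul j1 j2)) h *+ 3.
  combine (sagle j1 j2 e f) 2; combine (jac_ef_projJ (mul j1 j2)) (-1).
  combine (congr1 (mul j1) (jac_ef_J H2)) 1; combine (congr1 (mul^~ j2) (jac_ef_J H1)) 1.
  combine (congr1 (fun x => jac x j1 j2) ef2) (-2); anticomm.
have := congr1 projJ sagle_ef; rewrite !projJD !projJh !projJ_id => E.
by combine E (-1); anticomm.
Qed.

Lemma projJ_JJ_twisted x y : inJ x -> inJ y ->
  projJ (mul x y) + projJ (mul (mul x h) (mul y h)) *+ 2 = 0.
Proof.
move=> Hx Hy.
have [_ Hxh _ Hxhh] := J_action Hx; have [_ Hyh _ Hyhh] := J_action Hy.
have R1 := projJ_JJ_h Hx Hy.
have R2 := projJ_JJ_h Hx Hyh; rewrite Hyhh in R2.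
have R3 := projJ_JJ_h Hxh Hy; rewrite Hxhh in R3.
combine (congr1 (mul^~ h) R1) (-1); combine (projJ_hh (mul x y)) 1.
by combine R2 (-1); combine R3 (-1); anticomm.
Qed.

Lemma projJ_JJ j1 j2 : inJ j1 -> inJ j2 -> projJ (mul j1 j2) = 0.
Proof.
move=> H1 H2.
have [_ H1h _ H1hh] := J_action H1; have [_ H2h _ H2hh] := J_action H2.
have K1 := projJ_JJ_twisted H1 H2.
have K2 := projJ_JJ_twisted H1h H2h; rewrite H1hh H2hh in K2.
by apply: (natmul_eq0 char3); combine K1 (-1); combine K2 2; anticomm.
Qed.

(* Case N N <= N.  Here the Sagle identity for (n1 n2, e, f) gives the
   Jacobian J(n1,n2,h) in terms of the J-part of n1 n2. *)
Lemma jac_NN_h x y : inN x -> inN y -> jac x y h *+ 2 = mul (projJ (mul x y)) h *+ 3.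
Proof.
move=> Hx Hy.
combine (sagle x y e f) 2; combine (jac_ef_projJ (mul x y)) (-1).
combine (congr1 (mul x) (Hy e f inLe inLf)) 2; combine (congr1 (mul^~ y) (Hx e f inLe inLf)) 2.
by combine (congr1 (fun z => jac z x y) ef2) (-2); anticomm.
Qed.

Lemma projJ_NN_h x y : inN x -> inN y ->
  mul (projJ (mul x y)) h = - (projJ (mul (mul x h) y) + projJ (mul x (mul y h))) *+ 2.
Proof.
move=> Hx Hy.
have E1 : mul (mul x y) h *+ 2
          = mul x (mul y h) *+ 2 + mul (mul x h) y *+ 2 + mul (projJ (mul x y)) h *+ 3.
  by combine (jac_NN_h Hx Hy) 1; anticomm.
have := congr1 projJ E1; rewrite !projJD !projJh !projJ_id => E2.
by combine E2 (-1); anticomm.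
Qed.

Lemma projJ_NhN n1 n2 : inN n1 -> inN n2 -> projJ (mul (mul n1 h) n2) = 0.
Proof.
move=> H1 H2; have H1h := inN_h H1; have H2h := inN_h H2.
have E : mul (projJ (mul (mul n1 h) n2)) h *+ 3 *+ 3 = 0.
  combine (sagle h n1 n2 h) (-2); combine (jac_NN_h H1h H2) (-1).
  combine (congr1 (mul^~ h) (jac_NN_h H1 H2)) 1; combine (jac_NN_h H1 H2h) 2.
  by combine (congr1 (mul^~ h) (projJ_NN_h H1 H2)) 3; anticomm.
by rewrite -projJ_hh (natmul_eq0 char3 (natmul_eq0 char3 E)) mul0l.
Qed.

Lemma projJ_NN n1 n2 : inN n1 -> inN n2 -> projJ (mul n1 n2) = 0.
Proof.
move=> H1 H2; have E := projJ_NN_h H1 H2.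
rewrite projJ_NhN // (mul_anti n1 (mul n2 h)) projJN projJ_NhN ?inN_h // in E.
by rewrite -projJ_hh E oppr0 addr0 oppr0 mul0rn mul0l.
Qed.

(* Case N J <= J.  First the triple product with L only sees the N-part. *)
Lemma trip_L m a b : inL a -> inL b -> tr m a b = mul (projN m) (mul a b) *+ 3.
Proof.
move=> Ha Hb; have [HJ HN] := projJ_spec m.
by combine (HN a b Ha Hb) 1; combine (HJ a b Ha Hb) 1; anticomm.
Qed.

Lemma jac_NJ_L n j a b : inN n -> inJ j -> inL a -> inL b ->
  jac n j (mul a b)
  = mul (projN (mul n j)) (mul a b) *+ 3 - mul (mul n (mul a b)) j *+ 3.
Proof.
move=> Hn Hj Ha Hb.
combine (sagle n j a b) (-1); combine (trip_L (mul n j) Ha Hb) 1.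
combine (congr1 (mul^~ j) (Hn a b Ha Hb)) (-1); combine (congr1 (mul n) (Hj a b Ha Hb)) (-1).
anticomm.
Qed.

Lemma projN_NJ_L n j a b :
  (forall x, inN x -> inN (mul x (mul a b))) -> (forall x, inJ x -> inJ (mul x (mul a b))) ->
  inN n -> inJ j -> inL a -> inL b ->
  projN (mul n (mul j (mul a b)))
  = projN (mul (mul n (mul a b)) j) *+ 2 - mul (projN (mul n j)) (mul a b) *+ 2.
Proof.
move=> HNc HJc Hn Hj Ha Hb.
have projJc m : projJ (mul m (mul a b)) = mul (projJ m) (mul a b) by apply: projJ_mulr.
have E1 : mul (mul n j) (mul a b) = mul n (mul j (mul a b)) + mul (mul n (mul a b)) j
    + mul (projN (mul n j)) (mul a b) *+ 3 - mul (mul n (mul a b)) j *+ 3.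
  by combine (jac_NJ_L Hn Hj Ha Hb) 1; anticomm.
have := congr1 projJ E1; rewrite !(projJD, projJN, projJc, projJ_id) => E2.
by combine E1 (-1); combine E2 1; anticomm.
Qed.

Lemma jac_NJ_e x y : inN x -> inJ y ->
  jac x y e = mul (projN (mul x y)) e *+ 3 - mul (mul x e) y *+ 3.
Proof. by move=> Hx Hy; have := jac_NJ_L Hx Hy inLe inLh; rewrite eh. Qed.

Lemma jac_NJ_f x y : inN x -> inJ y ->
  jac x y f = mul (projN (mul x y)) f *+ 3 - mul (mul x f) y *+ 3.
Proof. by move=> Hx Hy; have := jac_NJ_L Hx Hy inLh inLf; rewrite hf. Qed.

Lemma projN_NJ_e x y : inN x -> inJ y ->
  projN (mul x (mul y e)) = projN (mul (mul x e) y) *+ 2 - mul (projN (mul x y)) e *+ 2.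
Proof.
move=> Hx Hy; have := projN_NJ_L _ _ Hx Hy inLe inLh; rewrite eh; apply.
  exact: inN_e.
by move=> z /J_action [].
Qed.

Lemma projN_NJ_f x y : inN x -> inJ y ->
  projN (mul x (mul y f)) = projN (mul (mul x f) y) *+ 2 - mul (projN (mul x y)) f *+ 2.
Proof.
move=> Hx Hy; have := projN_NJ_L _ _ Hx Hy inLh inLf; rewrite hf; apply.
  exact: inN_f.
by move=> z /J_action [].
Qed.

Lemma inN_ef x : inN x -> inN (mul x (mul e f)).
Proof. by move=> Hx; rewrite ef mulZr; apply/inNZ/inN_h. Qed.
Lemma inN_fe x : inN x -> inN (mul x (mul f e)).
Proof. by move=> Hx; rewrite (mul_anti f e) mulNr -scaleN1r; apply/inNZ/inN_ef. Qed.
Lemma inJ_ef x : inJ x -> inJ (mul x (mul e f)).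
Proof. by move=> Hx; rewrite ef mulZr; apply: inJZ; case: (J_action Hx). Qed.
Lemma inJ_fe x : inJ x -> inJ (mul x (mul f e)).
Proof. by move=> Hx; rewrite (mul_anti f e) mulNr; apply/inJN/inJ_ef. Qed.

Lemma projN_NJ_ef x y : inN x -> inJ y ->
  projN (mul x (mul y (mul e f)))
  = projN (mul (mul x (mul e f)) y) *+ 2 - mul (projN (mul x y)) (mul e f) *+ 2.
Proof. by move=> Hx Hy; apply: projN_NJ_L inLe inLf; [apply: inN_ef | apply: inJ_ef | |]. Qed.

Lemma projN_NJ_fe x y : inN x -> inJ y ->
  projN (mul x (mul y (mul f e)))
  = projN (mul (mul x (mul f e)) y) *+ 2 - mul (projN (mul x y)) (mul f e) *+ 2.
Proof. by move=> Hx Hy; apply: projN_NJ_L inLf inLe; [apply: inN_fe | apply: inJ_fe | |]. Qed.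

Lemma sagle_NJ n j c d : inN n -> inJ j -> inN (mul n c) -> inJ (mul j d) ->
  inL c -> inL d ->
  (forall x y, inN x -> inJ y ->
     jac x y d = mul (projN (mul x y)) d *+ 3 - mul (mul x d) y *+ 3) ->
  (forall x y, inN x -> inJ y ->
     jac x y c = mul (projN (mul x y)) c *+ 3 - mul (mul x c) y *+ 3) ->
  mul (projN (mul (mul n c) j)) d *+ 3 - mul (mul (mul n c) d) j *+ 3
  = mul (mul (projN (mul n j)) d) c *+ 3 - mul (mul (mul n d) j) c *+ 3
    - mul n (mul j (mul d c)) *+ 3 + mul (projN (mul n (mul j d))) c *+ 6
    - mul (mul n c) (mul j d) *+ 6.
Proof.
move=> Hn Hj Hnc Hjd Hc Hd jac_d jac_c.
combine (sagle c n j d) (-1); combine (congr1 (mul^~ n) (Hj d c Hd Hc)) (-1).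
combine (jac_d _ _ Hnc Hj) (-1); combine (congr1 (mul^~ c) (jac_d _ _ Hn Hj)) 1.
by combine (jac_c _ _ Hn Hjd) 2; anticomm.
Qed.

Lemma projN_NJ_ef_zero n j : inN n -> inJ j -> projN (mul n (mul j (mul e f))) = 0.
Proof.
move=> Hn Hj.
have [Hje _ Hjf _] := J_action Hj.
have Hne := inN_e Hn; have Hnf := inN_f Hn.
have U1 := sagle_NJ Hn Hj Hnf Hje inLf inLe jac_NJ_e jac_NJ_f.
have U2 := sagle_NJ Hn Hj Hne Hjf inLe inLf jac_NJ_f jac_NJ_e.
have V1 := congr1 projJ U1; rewrite !(projJD, projJN, projJe, projJf, projJ_id) in V1.
have V2 := congr1 projJ U2; rewrite !(projJD, projJN, projJe, projJf, projJ_id) in V2.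
have derEF : mul n (mul e f) = mul (mul n e) f - mul (mul n f) e.
  by apply/eqP; rewrite -subr_eq0; apply/eqP; combine (Hn e f inLe inLf) (-1); anticomm.
have derFE : mul n (mul f e) = mul (mul n f) e - mul (mul n e) f.
  by apply/eqP; rewrite -subr_eq0; apply/eqP; combine (Hn f e inLf inLe) (-1); anticomm.
have L1 := congr1 (mul^~ j) derEF.
have L2 := congr1 (fun x => projJ (mul x j)) derEF; rewrite /= mulDl mulNl projJD projJN in L2.
have L4 := congr1 (fun x => projJ (mul x j)) derFE; rewrite /= mulDl mulNl projJD projJN in L4.
have HP := (proj2 (projJ_spec (mul n j))) e f inLe inLf.
apply: (natmul_eq0 char3).
combine U1 2; combine V1 (-2); combine U2 (-2); combine V2 2.
combine (projN_NJ_ef Hn Hj) (-3); combine (projN_NJ_fe Hn Hj) 6.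
combine (congr1 (mul^~ f) (projN_NJ_e Hn Hj)) 12; combine (projN_NJ_e Hnf Hj) (-12).
combine (congr1 (mul^~ e) (projN_NJ_f Hn Hj)) (-12); combine (projN_NJ_f Hne Hj) 12.
combine L1 (-18); combine L2 6; combine L4 (-12); combine HP (-18); anticomm.
Qed.

Lemma projN_NJ n j : inN n -> inJ j -> projN (mul n j) = 0.
Proof.
move=> Hn Hj; have [_ Hjh _ Hjhh] := J_action Hj.
have := projN_NJ_ef_zero Hn Hjh.
rewrite ef mulZr Hjhh mulZr projJZ -scalerBr => /eqP.
by rewrite scaler_eq0 invr_eq0 (negbTE char2) => /eqP.
Qed.

Lemma Z2_grading x y :
  [/\ (inN x -> inN y -> inN (mul x y)),
      (inN x -> inJ y -> inJ (mul x y)) &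
      (inJ x -> inJ y -> inN (mul x y))].
Proof.
split=> Hx Hy; have [HJ HN] := projJ_spec (mul x y).
- by rewrite projJ_NN // subr0 in HN.
- by move/eqP: (projN_NJ Hx Hy); rewrite subr_eq0 => /eqP ->.
- by rewrite projJ_JJ // subr0 in HN.
Qed.

End Grading.
End MalcevAlgebra.

Theorem mainTheorem5 (K : fieldType) (M : lmodType K) (mul : M -> M -> M)
    (e h f : M)
    (char2 : (2%:R : K) != 0) (char3 : (3%:R : K) != 0)
    (HM : in_variety_H mul)
    (HL : sl2_triple mul e h f)
    (Hfaith : forall m : M, m != 0 -> exists a : M, inL e h f a /\ mul m a != 0)
    (Hdec : forall m : M, exists n j : M,
        [/\ inN mul e h f n, inJ mul e h f j & m = n + j])
    (Hdirect : forall m : M, inN mul e h f m -> inJ mul e h f m -> m = 0)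
    (Hstruct : forall j : M, inJ mul e h f j ->
        exists s : seq ((K * K) * (M * M)),
          (forall p, p \in s ->
             [/\ inJ mul e h f p.2.1 /\ inJ mul e h f p.2.2,
                 mul p.2.1 h = p.2.1 /\ mul p.2.2 h = - p.2.2,
                 mul p.2.1 e = p.2.2,
                 mul p.2.1 f = 0 /\ mul p.2.2 e = 0 &
                 mul p.2.2 f = - p.2.1]) /\
          j = \sum_(p <- s) (p.1.1 *: p.2.1 + p.1.2 *: p.2.2)) :
  forall x y : M,
    [/\ (inN mul e h f x -> inN mul e h f y -> inN mul e h f (mul x y)),
        (inN mul e h f x -> inJ mul e h f y -> inJ mul e h f (mul x y)) &
        (inJ mul e h f x -> inJ mul e h f y -> inN mul e h f (mul x y))].
Proof.
have [[bilinear anti malcev] _] := HM.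
have J_action := J_right_action bilinear anti Hstruct.
exact: Z2_grading char2 char3 HL Hdec J_action.
Qed.
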